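(* If $G$ is a connected graph that is not a path, then the detour sequence of $G$ has a repetition of length at least three; that is, some value occurs at least three times in the detour sequence of $G$.
   Context: All graphs are finite and simple. The order of a path is its number of vertices. For a vertex $v$ of $G$, $\tau(v)$ is the order of a longest path in $G$ having $v$ as an endvertex. The detour sequence of $G$ is the nondecreasing sequence of the values $\tau(v)$, $v\in V(G)$ (one term per vertex). A repetition is a maximal block of at least two consecutive equal terms of the sequence; its length is the number of terms in the block. *)

From mathcomp Require Import all_boot.
Set Implicit Arguments. Unset Strict Implicit. Unset Printing Implicit Defensive.

Definition simple_graph (T : finType) (e : rel T) : Prop :=
  symmetric e /\ irreflexive e.

Definition connected_graph (T : finType) (e : rel T) : Prop :=
  0 < #|T| /\ forall x y : T, connect e x y.

Definition is_path_graph (T : finType) (e : rel T) : Prop :=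
  exists s : seq T, [/\ uniq s, (forall x, x \in s) &
    forall x y, e x y = (index y s == (index x s).+1) || (index x s == (index y s).+1)].

(* A path of order n.+1 starting at v: v :: t with t : n.-tuple T,
   all vertices distinct and consecutive vertices adjacent. *)
Definition has_path_from (T : finType) (e : rel T) (v : T) (n : nat) : bool :=
  [exists t : n.-tuple T, uniq (v :: t) && path e v t].

(* tau v = order of a longest path with v as an endvertex (orders are <= #|T|). *)
Definition tau (T : finType) (e : rel T) (v : T) : nat :=
  \max_(n < #|T| | has_path_from e v n) n.+1.

From mathcomp Require Import all_boot.
From mathcomp Require Import zify.

(* Suppose every value of tau occurs at most twice; let L be the largest value
   and Q = q_0 ... q_(L-1) a path realising it.  The subpaths q_r ... q_(L-1)
   and q_r ... q_0 give tau q_r >= max (L - r) (r + 1), so the first h and the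
   last h vertices of Q have tau >= L + 1 - h; since at most 2h vertices have
   such values, every other vertex has tau <= L - h.  A vertex x outside Q
   adjacent to q_i with 2i <= L would start the path x q_i ... q_(L-1) of
   order L - i + 1, and a chord q_i q_j with i + 1 < j, i + j < L would give
   the path q_(j-1) ... q_i q_j ... q_(L-1) of order L - i; both contradict
   that bound.  By symmetry (reversing Q) there are no such edges at all, so
   by connectivity Q spans G and, having no chord, G is the path Q. *)

Set Implicit Arguments.
Unset Strict Implicit.
Unset Printing Implicit Defensive.

Lemma in_drop (T : eqType) (x : T) s i :
  uniq s -> x \in s -> (x \in drop i s) = (i <= index x s).
Proof.
move=> s_uniq xs; case: ltnP => [x_front | x_back].
  move: s_uniq; rewrite -{1}(cat_take_drop i s) cat_uniq => /and3P [_ /hasPn disj _].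
  by apply/negP => /disj; rewrite in_take // x_front.
by have := xs; rewrite -{1}(cat_take_drop i s) mem_cat in_take // ltnNge x_back.
Qed.

Section Tau.
Variables (T : finType) (e : rel T).

Lemma path_le_tau v s : uniq (v :: s) -> path e v s -> (size s).+1 <= tau e v.
Proof.
move=> vs_uniq vs_path.
have s_lt : size s < #|T|.
  by have := max_card (mem (v :: s)); rewrite (card_uniqP vs_uniq).
rewrite /tau (bigmax_sup (Ordinal s_lt)) //.
by apply/existsP; exists (in_tuple s); apply/andP.
Qed.

Lemma longest_path_from v :
  exists s, [/\ uniq (v :: s), path e v s & (size s).+1 = tau e v].
Proof.
have T_gt0 : 0 < #|T| by apply/card_gt0P; exists v.
have trivial_path : has_path_from e v (Ordinal T_gt0) by apply/existsP; exists [tuple].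
rewrite /tau (bigmax_eq_arg (Ordinal T_gt0)) //.
case: arg_maxnP => // n /existsP [t /andP [t_uniq t_path]] _.
by exists t; rewrite size_tuple.
Qed.

Hypothesis e_sym : symmetric e.

Lemma sorted_rev_sym s : sorted e (rev s) = sorted e s.
Proof. by rewrite rev_sorted; case: s => //= x s; apply: eq_path => y z; apply: e_sym. Qed.

Lemma path_rev_cat_le_tau x a y b :
  uniq (x :: a ++ y :: b) -> path e x a -> e x y -> path e y b ->
  (size a + size b).+2 <= tau e (last x a).
Proof.
move=> xayb_uniq xa xy yb.
apply: leq_trans (@path_le_tau _ (rev (belast x a) ++ y :: b) _ _).
- by rewrite size_cat size_rev size_belast /= addnS.
- rewrite -cat_cons -rev_rcons -lastI.
  by rewrite (perm_uniq (_ : perm_eq _ ((x :: a) ++ y :: b))) // perm_cat2r perm_rev.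
rewrite cat_path rev_path (eq_path (e' := e)) => [|u w]; last exact: e_sym.
by rewrite xa -(last_cons x (last x a)) -rev_rcons -lastI rev_cons last_rcons /= xy.
Qed.

End Tau.

Section LongestPath.
Variables (T : finType) (e : rel T) (L : nat).
Hypothesis e_sym : symmetric e.
Hypothesis tau_le_L : forall v, tau e v <= L.
Hypothesis tau_fibre_le2 : forall k, #|[set v | tau e v == k]| <= 2.

Lemma card_tau_ge d : #|[set v | L + 1 - d <= tau e v]| <= 2 * d.
Proof.
elim: d => [|d IHd].
  rewrite (_ : [set v | _] = set0) ?cards0 //.
  by apply/setP => v; rewrite !inE; have := tau_le_L v; lia.
have split_d : [set v | L + 1 - d.+1 <= tau e v] \subset
    [set v | tau e v == L - d] :|: [set v | L + 1 - d <= tau e v].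
  by apply/subsetP => v; rewrite !inE; lia.
apply: leq_trans (subset_leq_card split_d) _.
apply: leq_trans (leq_card_setU _ _).1 _.
by rewrite mulnS leq_add.
Qed.

Section FixedPath.
Variables (x0 : T) (Q : seq T).
Hypotheses (Q_uniq : uniq Q) (Q_sorted : sorted e Q) (size_Q : size Q = L).

Lemma tau_mem_ge x : x \in Q -> maxn (L - index x Q) (index x Q).+1 <= tau e x.
Proof.
move=> xQ; set r := index x Q.
have r_lt : r < L by rewrite -size_Q index_mem.
have nth_r : nth x Q r = x by rewrite nth_index.
rewrite geq_max; apply/andP; split.
  have := drop_uniq r Q_uniq; have := drop_sorted r Q_sorted.
  rewrite (drop_nth x) ?size_Q // nth_r => suffix_sorted suffix_uniq.
  by have := path_le_tau suffix_uniq suffix_sorted; rewrite size_drop size_Q; lia.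
have := take_uniq r.+1 Q_uniq; have := take_sorted r.+1 Q_sorted.
rewrite -rev_uniq -(sorted_rev_sym e_sym) (take_nth x) ?size_Q // nth_r rev_rcons.
move=> prefix_sorted prefix_uniq.
by have := path_le_tau prefix_uniq prefix_sorted; rewrite size_rev size_takel // size_Q ltnW.
Qed.

Lemma tau_le_middle h w :
  2 * h <= L -> (w \in Q -> h <= index w Q < L - h) -> tau e w <= L - h.
Proof.
move=> h_half w_middle; rewrite leqNgt; apply/negP => w_high.
pose ends := take h Q ++ drop (L - h) Q.
have ends_uniq : uniq (w :: ends).
  rewrite /= (subseq_uniq _ Q_uniq) ?andbT.
    rewrite mem_cat negb_or; have [wQ | wQ] := boolP (w \in Q).
      by rewrite in_take // in_drop //; have := w_middle wQ; lia.
    by apply/andP; split; apply: contra wQ; [apply: mem_take | apply: mem_drop].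
  rewrite /ends -[X in subseq _ X](cat_take_drop h Q) cat_subseq //.
  have -> : L - h = (L - h - h) + h by lia.
  by rewrite -drop_drop drop_subseq.
have ends_high : #|w :: ends| <= #|[set v | L + 1 - h <= tau e v]|.
  apply/subset_leq_card/subsetP => x; rewrite in_cons inE mem_cat.
  case/predU1P => [-> | x_ends]; first by lia.
  have xQ : x \in Q by case/orP: x_ends => [/mem_take | /mem_drop].
  move: x_ends (tau_mem_ge xQ); rewrite in_take // in_drop //; lia.
move: ends_high (card_tau_ge h); rewrite (card_uniqP ends_uniq) /= size_cat.
by rewrite size_takel ?size_drop size_Q; lia.
Qed.

Lemma no_exit_first_half x i :
  x \notin Q -> 2 * i <= L -> i < L -> ~~ e x (nth x0 Q i).
Proof.
move=> xQ i_half i_lt; apply/negP => x_to_Q.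
have x_high : (size (drop i Q)).+1 <= tau e x.
  apply: path_le_tau.
    by rewrite /= drop_uniq // andbT; apply: contra xQ; apply: mem_drop.
  by have := drop_sorted i Q_sorted; rewrite (drop_nth x0) ?size_Q //= x_to_Q.
have x_low : tau e x <= L - i by apply: tau_le_middle => // xQ'; rewrite xQ' in xQ.
by move: x_high; rewrite size_drop size_Q; lia.
Qed.

Lemma no_chord_first_half i j :
  i.+1 < j -> i + j < L -> ~~ e (nth x0 Q i) (nth x0 Q j).
Proof.
move=> ij ij_lt; apply/negP => chord.
pose a := take (j - i.+1) (drop i.+1 Q).
have Q_split : drop i Q = nth x0 Q i :: a ++ nth x0 Q j :: drop j.+1 Q.
  rewrite (drop_nth x0) ?size_Q; last by lia.
  congr cons; rewrite -(drop_nth x0) ?size_Q; last by lia.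
  by rewrite -{1}(cat_take_drop (j - i.+1) (drop i.+1 Q)) drop_drop subnK // ltnW.
have a_last : last (nth x0 Q i) a = nth x0 Q j.-1.
  rewrite /a (_ : j - i.+1 = (j - i.+2).+1); last by lia.
  rewrite (take_nth x0) ?size_drop ?size_Q; last by lia.
  by rewrite last_rcons nth_drop; congr nth; lia.
have := drop_uniq i Q_uniq; have := drop_sorted i Q_sorted.
rewrite Q_split /= cat_path /= => /and3P [xa _ yb] xayb_uniq.
have := path_rev_cat_le_tau e_sym xayb_uniq xa chord yb.
rewrite a_last size_takel ?size_drop ?size_Q; last by lia.
have : tau e (nth x0 Q j.-1) <= L - i.+1.
  by apply: tau_le_middle => [|_]; rewrite ?index_uniq ?size_Q //; lia.
lia.
Qed.

End FixedPath.

Lemma longest_path_no_exit Q x y :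
  uniq Q -> sorted e Q -> size Q = L -> x \notin Q -> y \in Q -> ~~ e x y.
Proof.
move=> Q_uniq Q_sorted size_Q xQ yQ.
have i_lt : index y Q < L by rewrite -size_Q index_mem.
rewrite -(nth_index y yQ).
have [i_half | i_half] := leqP (2 * index y Q) L; first exact: no_exit_first_half.
have -> : nth y Q (index y Q) = nth y (rev Q) (L - (index y Q).+1).
  by rewrite nth_rev size_Q; [congr nth; lia | lia].
apply: no_exit_first_half; rewrite ?rev_uniq ?(sorted_rev_sym e_sym) ?size_rev ?mem_rev //.
all: lia.
Qed.

Lemma longest_path_no_chord x0 Q i j :
  uniq Q -> sorted e Q -> size Q = L -> i.+1 < j < L ->
  ~~ e (nth x0 Q i) (nth x0 Q j).
Proof.
move=> Q_uniq Q_sorted size_Q /andP [ij j_lt].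
have [ij_lt | ij_ge] := ltnP (i + j) L; first exact: no_chord_first_half.
have nth_Q k : k < L -> nth x0 Q k = nth x0 (rev Q) (L - k.+1).
  by move=> k_lt; rewrite nth_rev size_Q; [congr nth; lia | lia].
rewrite e_sym nth_Q 1?nth_Q; try lia.
apply: no_chord_first_half; rewrite ?rev_uniq ?(sorted_rev_sym e_sym) ?size_rev //.
all: lia.
Qed.

End LongestPath.

Lemma no_exit_connected_full (T : finType) (e : rel T) (s : seq T) x :
  symmetric e -> (forall u v, connect e u v) ->
  (forall u v, u \notin s -> v \in s -> ~~ e u v) -> x \in s -> forall u, u \in s.
Proof.
move=> e_sym e_conn s_no_exit xs u.
have s_closed : closed e s.
  apply: (intro_closed (sym_connect_sym e_sym)) => v w vw vs.
  by move: vw; apply: contraTT => ws; rewrite e_sym s_no_exit.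
by rewrite (closed_connect s_closed (e_conn u x)).
Qed.

Lemma chordless_spanning_path_graph (T : finType) (e : rel T) x0 Q :
  symmetric e -> irreflexive e -> uniq Q -> sorted e Q -> (forall u, u \in Q) ->
  (forall i j, i.+1 < j < size Q -> ~~ e (nth x0 Q i) (nth x0 Q j)) ->
  is_path_graph e.
Proof.
move=> e_sym e_irr Q_uniq Q_sorted Q_full no_chord; exists Q; split=> // x y.
set a := index x Q; set b := index y Q.
have a_lt : a < size Q by rewrite index_mem.
have b_lt : b < size Q by rewrite index_mem.
have -> : e x y = e (nth x0 Q a) (nth x0 Q b) by rewrite !nth_index.
apply/idP/idP => [xy | /orP [] /eqP adj].
- have not_ab : ~~ (a.+1 < b) by apply: contraL xy => ab; apply: no_chord; rewrite ab.
  have not_ba : ~~ (b.+1 < a).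
    by apply: contraL xy => ba; rewrite e_sym; apply: no_chord; rewrite ba.
  have a_neq_b : a != b by apply: contraL xy => /eqP ->; rewrite e_irr.
  lia.
- by rewrite adj; apply/(sortedP x0 Q_sorted); rewrite -adj.
- by rewrite adj e_sym; apply/(sortedP x0 Q_sorted); rewrite -adj.
Qed.

Theorem theorem1p10 (T : finType) (e : rel T) :
  simple_graph e -> connected_graph e -> ~ is_path_graph e ->
  exists k : nat, 3 <= #|[set v : T | tau e v == k]|.
Proof.
move=> [e_sym e_irr] [T_gt0 e_conn] not_path.
have [/existsP [v big_fibre] | no_big_fibre] :=
  boolP [exists v, 2 < #|[set u | tau e u == tau e v]|]; first by exists (tau e v).
have fibre_le2 k : #|[set v | tau e v == k]| <= 2.
  have [-> | [v]] := set_0Vmem [set v | tau e v == k]; first by rewrite cards0.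
  rewrite inE => /eqP <-; rewrite leqNgt; apply: contra no_big_fibre => big_fibre.
  by apply/existsP; exists v.
have /card_gt0P [v0 _] := T_gt0.
pose vm := [arg max_(v > v0) tau e v].
have tau_le_vm v : tau e v <= tau e vm by rewrite /vm; case: arg_maxnP => // w _; apply.
have [s [s_uniq s_path size_s]] := longest_path_from e vm.
case: not_path; apply: (chordless_spanning_path_graph (x0 := vm) e_sym e_irr s_uniq s_path).
  apply: (no_exit_connected_full e_sym e_conn _ (mem_head vm s)) => x y.
  exact: (longest_path_no_exit e_sym tau_le_vm fibre_le2).
move=> i j; rewrite /= size_s.
exact: (longest_path_no_chord e_sym tau_le_vm fibre_le2).
Qed.
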